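(* Let $\mathfrak{G}$ be a non-redundant assembly graph, $v$ a vertex and $s$ a finite string such that $Label(v)=MES(s)$, the MES extension being taken with respect to $\mathrm{CPC}(\mathfrak{G})$. Then for every circuit $C$ of $\mathfrak{G}$, the number of occurrences of $v$ in $C$ equals the number of occurrences of $s$ in $Label(C)$.
   Context: All strings are over a fixed finite alphabet $\Sigma$. A cyclic string is a bi-infinite periodic word $\mathbb{Z}\to\Sigma$ up to shift, with least period $d$; for a nonempty finite $x$, $\langle x\rangle$ is the cyclic string repeating $x$. Occurrences of a finite string in a cyclic string are counted by start positions modulo $d$; a cyclic string is a substring only of itself. A string $u$ is a proper infix of $w$ if $w=aub$ with $a,b$ nonempty. A string $t$ is a MES for a set $\mathfrak{C}$ of cyclic strings if it is a substring of some element of $\mathfrak{C}$ and every proper superstring of $t$ has strictly fewer occurrences than $t$ in at least one element of $\mathfrak{C}$. For a finite substring $s$ of an element of $\mathfrak{C}$, $MES(s)$ is the unique MES in which $s$ occurs exactly once and such that every occurrence of $s$ in an element of $\mathfrak{C}$ extends to an occurrence of $MES(s)$. An abstract assembly graph is a finite directed multigraph with labelled vertices and edges such that for every edge $e$ from $u$ to $v$, $Label(u)$ is a prefix and $Label(v)$ a suffix of $Label(e)$; $e$ is a prefix edge if $Label(e)=Label(v)$ and a suffix edge if $Label(e)=Label(u)$. An assembly graph is one in which every vertex and edge lies on a directed cycle and no edge is both a prefix and a suffix edge. Walk label of $v_0,e_1,\dots,e_n,v_n$: $Label(e_1)$ followed, for $i\ge2$, by $Label(e_i)$ with its first $|Label(v_{i-1})|$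 characters removed. A circuit is a primitive closed walk up to rotation; if its walk label is $Label(v_0)x$, its label is $\langle x\rangle$; the number of occurrences of $v$ in the circuit is the number of $i\in\{1,\dots,n\}$ with $v_i=v$; $\mathrm{CPC}$ is the set of circuit labels. $P$ is an inner subwalk of $Q$ if $Q=APB$ with walks $A,B$ each having at least one edge; the graph is non-redundant if whenever $Label(P)$ is a proper infix of $Label(Q)$, $P$ is an inner subwalk of $Q$. *)

From mathcomp Require Import all_boot.
Set Implicit Arguments. Unset Strict Implicit. Unset Printing Implicit Defensive.

Section Strings.
Variable T : finType.

(** Cyclic strings are represented by a nonempty representative word x,
    standing for <x>, the bi-infinite word i |-> x[i mod |x|]. *)

(* letter of the bi-infinite word <x> at position i (None iff x = [::]) *)
Definition wat (x : seq T) (i : nat) : option T :=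
  nth None (map Some x) (i %% size x).

Definition cper (x : seq T) : nat :=
  (find (fun d => rot d.+1 x == x) (iota 0 (size x))).+1.

Definition match_at (u x : seq T) (i : nat) : bool :=
  map Some u == [seq wat x (i + k) | k <- iota 0 (size u)].

(* number of occurrences of u in <x>, start positions counted modulo the
   least period *)
Definition occ_cyc (u x : seq T) : nat :=
  count (match_at u x) (iota 0 (cper x)).

Definition occurs_fin_at (u t : seq T) (j : nat) : bool :=
  (j + size u <= size t) && (take (size u) (drop j t) == u).

Definition occ_fin (u t : seq T) : nat :=
  count (occurs_fin_at u t) (iota 0 (size t).+1).

Definition cyc_eq (x y : seq T) : Prop :=
  x <> [::] /\ y <> [::] /\ exists i, forall j, wat x (i + j) = wat y j.

Section MES.
(* a set of cyclic strings, given by a predicate on nonempty representatives *)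
Variable C : seq T -> Prop.

Definition is_MES_fin (t : seq T) : Prop :=
  (exists c, C c /\ 0 < occ_cyc t c) /\
  (forall u : seq T, infix t u -> u <> t ->
     exists c, C c /\ occ_cyc u c < occ_cyc t c) /\
  (* cyclic superstrings <y> (in which t occurs); the number of occurrences
     of <y> in <c> is 1 if <y> = <c> and 0 otherwise *)
  (forall y : seq T, y <> [::] -> 0 < occ_cyc t y ->
     exists c, C c /\
       ((cyc_eq y c /\ 1 < occ_cyc t c) \/ (~ cyc_eq y c /\ 0 < occ_cyc t c))).

Definition is_MES_of (s t : seq T) : Prop :=
  (exists c, C c /\ 0 < occ_cyc s c) /\
  is_MES_fin t /\
  occ_fin s t = 1 /\
  (forall c, C c -> forall i, i < cper c -> match_at s c i ->
     exists p j, match_at t c p /\ occurs_fin_at s t j /\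
                 p + j = i %[mod cper c]).
End MES.
End Strings.

Section Graphs.
Variables (T : finType) (V E : finType) (src tgt : E -> V)
          (lv : V -> seq T) (le : E -> seq T).

(* a walk v0, e1, v1, ..., en, vn is given by v0 and the edge list [e1..en] *)
Fixpoint is_walk (v0 : V) (es : seq E) : bool :=
  if es is e :: es' then (src e == v0) && is_walk (tgt e) es' else true.

Definition wend (v0 : V) (es : seq E) : V := last v0 (map tgt es).

(* walk label; for n >= 1 this is Label(e1) followed by the Label(e_i) with
   their first |Label(v_{i-1})| characters removed; for n = 0 it is Label(v0) *)
Definition wlabel (v0 : V) (es : seq E) : seq T :=
  lv v0 ++ flatten [seq drop (size (lv (src e))) (le e) | e <- es].

Definition closed_walk (v0 : V) (es : seq E) : bool :=
  [&& es != [::], is_walk v0 es & wend v0 es == v0].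

Definition primitive_edges (es : seq E) : Prop :=
  forall (k : nat) (p : seq E), 1 < k -> es <> flatten (nseq k p).

(* a circuit (given by one of its rotations) *)
Definition circuit (v0 : V) (es : seq E) : Prop :=
  closed_walk v0 es /\ primitive_edges es.

Definition clabel (v0 : V) (es : seq E) : seq T :=
  drop (size (lv v0)) (wlabel v0 es).

Definition vocc (v : V) (es : seq E) : nat := count (fun e => tgt e == v) es.

Definition CPC (c : seq T) : Prop :=
  exists v0 es, circuit v0 es /\ c = clabel v0 es.

Definition abstract_assembly_graph : Prop :=
  forall e, prefix (lv (src e)) (le e) /\ suffix (lv (tgt e)) (le e).

Definition prefix_edge (e : E) : bool := le e == lv (tgt e).
Definition suffix_edge (e : E) : bool := le e == lv (src e).

Definition assembly_graph : Prop :=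
  abstract_assembly_graph /\
  (forall v, exists v0 es, closed_walk v0 es /\ v \in map tgt es) /\
  (forall e, exists v0 es, closed_walk v0 es /\ e \in es) /\
  (forall e, ~~ (prefix_edge e && suffix_edge e)).

Definition inner_subwalk (p0 : V) (ps : seq E) (q0 : V) (qs : seq E) : Prop :=
  exists (a b : seq E), a <> [::] /\ b <> [::] /\
    qs = a ++ ps ++ b /\ wend q0 a = p0.

Definition proper_infix (u w : seq T) : Prop :=
  exists a b, a <> [::] /\ b <> [::] /\ w = a ++ u ++ b.

Definition non_redundant : Prop :=
  forall p0 ps q0 qs, is_walk p0 ps -> is_walk q0 qs ->
    proper_infix (wlabel p0 ps) (wlabel q0 qs) -> inner_subwalk p0 ps q0 qs.

End Graphs.

From mathcomp Require Import all_boot zify.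
Set Implicit Arguments. Unset Strict Implicit. Unset Printing Implicit Defensive.

(* Unroll the circuit r times.  The label of the unrolled walk is [lv v0]
   followed by r copies of the circuit label L, and the label of its k-th
   vertex occurs in it at a position [vpos k].  These positions never
   decrease, and they strictly increase between two visits of the same
   vertex: a stretch of walk that does not advance uses only prefix edges,
   which strictly lengthen vertex labels.  Conversely, non-redundancy says
   that every occurrence of a walk label strictly inside the unrolled label is
   realised by a subwalk starting at exactly that position.  Hence the visits
   of v in one turn correspond, modulo |L|, to the occurrences of [lv v] in
   <L>; and L is primitive, since a rotation of L fixing it would realise the
   circuit at a shifted position, contradicting the primitivity of its edge
   sequence.  Finally s occurs exactly once in [lv v] = MES(s) and every
   occurrence of s extends to one of MES(s), so the occurrences of [lv v] and
   of s in <L> correspond one-to-one. *)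

Section SeqFacts.
Variable A : Type.
Implicit Types (s w : seq A).

Lemma size_flatten_nseq r w : size (flatten (nseq r w)) = r * size w.
Proof. by elim: r => //= r IH; rewrite size_cat IH mulSn. Qed.

Lemma nth_flatten_nseq x0 r w q :
  q < r * size w -> nth x0 (flatten (nseq r w)) q = nth x0 w (q %% size w).
Proof.
elim: r q => [|r IH] q; first by rewrite mul0n.
rewrite mulSn /= nth_cat => Hq.
case: ltnP => Hw; first by rewrite modn_small.
rewrite IH; last by lia.
by rewrite -{2}(subnK Hw) modnDr.
Qed.

Lemma nth_rot x0 d s y :
  d < size s -> y < size s -> nth x0 (rot d s) y = nth x0 s ((y + d) %% size s).
Proof.
move=> Hd Hy; rewrite /rot nth_cat size_drop.
case: ltnP => H; first by rewrite nth_drop modn_small 1?addnC //; lia.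
rewrite nth_take; last by lia.
have -> : y + d = y + d - size s + size s by lia.
by rewrite modnDr modn_small; [congr nth|]; lia.
Qed.

Lemma drop_take_flatten_nseq r w k : 0 < size w -> k + size w <= r * size w ->
  drop k (take (k + size w) (flatten (nseq r w))) = rot (k %% size w) w.
Proof.
move=> Hw Hk; have x0 : A by case: w Hw {Hk} => // x0.
have Hsz : size (drop k (take (k + size w) (flatten (nseq r w)))) = size w.
  by rewrite size_drop size_takel ?addKn // size_flatten_nseq.
apply: (eq_from_nth (x0 := x0)); first by rewrite Hsz size_rot.
move=> y; rewrite Hsz => Hy.
rewrite nth_rot ?ltn_pmod // nth_drop nth_take ?ltn_add2l //.
by rewrite nth_flatten_nseq ?modnDmr 1?addnC //; lia.
Qed.

End SeqFacts.

Lemma rot_primitive (E : finType) (s : seq E) i :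
  primitive_edges s -> i < size s -> rot i s = s -> i = 0.
Proof.
move=> Hprim Hi Hrot; case: (posnP i) => // Hi0; exfalso.
have x0 : E by case: s Hi {Hprim Hrot} => // x0.
set n := size s; have Hn : 0 < n by lia.
have shift_i y : y < n -> nth x0 s ((y + i) %% n) = nth x0 s y.
  by move=> Hy; rewrite -nth_rot // Hrot.
have shift_ci c y : y < n -> nth x0 s ((y + c * i) %% n) = nth x0 s y.
  elim: c y => [|c IH] y Hy; first by rewrite addn0 modn_small.
  have -> : y + c.+1 * i = y + c * i + i by rewrite mulSn; lia.
  by rewrite -modnDml shift_i ?ltn_pmod // IH.
case: (Bezoutr i Hn) => a _ /eqP Hdvd; set g := gcdn i n in Hdvd.
have Hg : 0 < g by rewrite gcdn_gt0 Hi0.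
have Hgn : g %| n by apply: dvdn_gcdr.
have Hgi : g <= i by apply: dvdn_leq => //; apply: dvdn_gcdl.
(* [n] divides [g + a * i], so shifting by [a * i] shifts back by [g] *)
have shift_g y : g <= y -> y < n -> nth x0 s (y - g) = nth x0 s y.
  move=> Hgy Hy; rewrite -(shift_ci a y Hy).
  have -> : y + a * i = y - g + (g + a * i) by lia.
  by rewrite -modnDmr Hdvd addn0 modn_small //; lia.
have period_g y : y < n -> nth x0 s y = nth x0 s (y %% g).
  elim/ltn_ind: y => y IH Hy.
  case: (ltnP y g) => Hyg; first by rewrite modn_small.
  rewrite -shift_g // IH; [|lia|lia].
  by rewrite -{2}(subnK Hyg) modnDr.
have Hk : 1 < n %/ g by move: (divnK Hgn); case: (n %/ g) => [|[|k]] /=; lia.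
apply: (Hprim _ (take g s) Hk).
have Hsz : size (take g s) = g by rewrite size_takel //; lia.
apply: (eq_from_nth (x0 := x0)); first by rewrite size_flatten_nseq Hsz divnK.
move=> y Hy; rewrite nth_flatten_nseq Hsz ?divnK //.
by rewrite nth_take ?ltn_pmod // -period_g.
Qed.

Lemma count_iota_bij (P Q : pred nat) K M (f : nat -> nat) :
  {in [pred i | i < K & P i] &, injective f} ->
  (forall i, i < K -> P i -> f i < M /\ Q (f i)) ->
  (forall p, p < M -> Q p -> exists2 i, i < K /\ P i & f i = p) ->
  count P (iota 0 K) = count Q (iota 0 M).
Proof.
move=> Hinj Hto Hon; rewrite -!size_filter -(size_map f).
apply/perm_size/uniq_perm; last 1 first.
- move=> p; rewrite mem_filter mem_iota /=; apply/mapP/andP => [[i] | [Qp Hp]].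
    by rewrite mem_filter mem_iota /= => /andP [Pi Hi] ->; have [] := Hto i Hi Pi.
  case: (Hon p Hp Qp) => i [Hi Pi] <-.
  by exists i; rewrite // mem_filter mem_iota /= Pi Hi.
- rewrite map_inj_in_uniq ?filter_uniq ?iota_uniq // => i j.
  rewrite !mem_filter !mem_iota /= => /andP [Pi Hi] /andP [Pj Hj].
  by apply: Hinj; apply/andP.
by rewrite filter_uniq ?iota_uniq.
Qed.

Lemma count_iota_eq1 (P : pred nat) K :
  count P (iota 0 K) = 1 -> exists2 j0, P j0 & forall j, j < K -> P j -> j = j0.
Proof.
move=> Hc; have : has P (iota 0 K) by rewrite has_count Hc.
case/hasP=> j0; rewrite mem_iota /= => Hj0 Pj0; exists j0 => // j Hj Pj.
apply/eqP; apply: contraT => Hneq.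
have : size [:: j; j0] <= size (filter P (iota 0 K)).
  apply: uniq_leq_size; first by rewrite /= inE Hneq.
  by move=> z; rewrite !inE mem_filter mem_iota => /orP[] /eqP ->; apply/andP.
by rewrite size_filter Hc.
Qed.

Lemma eq_modn_window m a b : a <= b < a + m -> a %% m = b %% m -> a = b.
Proof.
case/andP=> Hab Hbm /esym/eqP; rewrite eqn_mod_dvd // => Hdvd.
case: (ltnP a b) => [Hlt|]; last by lia.
have Hpos : 0 < b - a by lia.
by have := dvdn_leq Hpos Hdvd; lia.
Qed.

Section Occurrences.
Variable T : finType.
Implicit Types (u t w : seq T).

Lemma occurs_fin_atP x0 u t j :
  reflect (j + size u <= size t /\
           forall k, k < size u -> nth x0 t (j + k) = nth x0 u k)
          (occurs_fin_at u t j).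
Proof.
apply: (iffP andP) => [[H /eqP E]|[H E]]; split => //.
  by move=> k Hk; rewrite -E nth_take // nth_drop.
apply/eqP/(eq_from_nth (x0 := x0)); first by rewrite size_takel // size_drop; lia.
move=> k; rewrite size_takel ?size_drop => [Hk|]; last by lia.
by rewrite nth_take // nth_drop E.
Qed.

Lemma occurs_fin_at_cat u t j :
  occurs_fin_at u t j -> t = take j t ++ u ++ drop (j + size u) t.
Proof.
case/andP=> _ /eqP E.
rewrite -{1}(cat_take_drop j t) -{1}(cat_take_drop (size u) (drop j t)) E.
by rewrite drop_drop addnC.
Qed.

Lemma occurs_fin_at_catl a u b : occurs_fin_at u (a ++ u ++ b) (size a).
Proof.
rewrite /occurs_fin_at drop_size_cat // take_size_cat // eqxx.
by rewrite !size_cat leq_add2l leq_addr.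
Qed.

Lemma occurs_fin_at_proper_infix u w t p q :
  occurs_fin_at u t q -> occurs_fin_at w t p -> p < q -> q + size u < p + size w ->
  proper_infix u w.
Proof.
move=> Hut Hwt Hpq Hqw; have x0 : T by case: w Hqw {Hwt} => [/= ?|x0 //]; lia.
case/(occurs_fin_atP x0): Hut => Hu Eu; case/(occurs_fin_atP x0): Hwt => Hw Ew.
have Huw : occurs_fin_at u w (q - p).
  apply/(occurs_fin_atP x0); split=> [|k Hk]; first by lia.
  by rewrite -Ew ?addnA ?subnKC -?Eu //; lia.
exists (take (q - p) w), (drop (q - p + size u) w).
split; [|split; last exact: occurs_fin_at_cat].
  by move/(f_equal size); rewrite size_takel /=; lia.
by move/(f_equal size); rewrite size_drop /=; lia.
Qed.

Lemma match_atP x0 u (x : seq T) p :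
  0 < size x ->
  reflect (forall k, k < size u -> nth x0 u k = nth x0 x ((p + k) %% size x))
          (match_at u x p).
Proof.
move=> Hx; have Hu : map Some u = [seq Some (nth x0 u k) | k <- iota 0 (size u)].
  by rewrite -{1}(mkseq_nth x0 u) /mkseq -map_comp.
rewrite /match_at Hu; apply: (iffP eqP) => [H k Hk | H].
  move/(congr1 (nth None ^~ k)): H; rewrite !(nth_map 0) ?size_iota // nth_iota //.
  by rewrite /wat (nth_map x0) ?ltn_pmod // => -[].
apply/eq_in_map => k; rewrite mem_iota /= => Hk.
by rewrite /wat (nth_map x0) ?ltn_pmod // H.
Qed.

Lemma match_at_mod u (x : seq T) p :
  0 < size x -> match_at u x (p %% size x) = match_at u x p.
Proof.
move=> Hx; have x0 : T by case: x Hx => // x0.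
by apply/(match_atP x0 _ _ Hx)/(match_atP x0 _ _ Hx) => H k Hk; rewrite H // modnDml.
Qed.

Lemma match_at_rot u (x : seq T) p d :
  d < size x -> rot d x = x -> match_at u x p -> match_at u x (p + d).
Proof.
move=> Hd Hrot; have Hx : 0 < size x by lia.
have x0 : T by case: x Hx {Hd Hrot} => // x0.
move/(match_atP x0 _ _ Hx) => H; apply/(match_atP x0 _ _ Hx) => k Hk.
rewrite H // -{1}Hrot nth_rot ?ltn_pmod // modnDml; congr (nth _ _ (_ %% _)); lia.
Qed.

Lemma cper_size (x : seq T) :
  0 < size x -> (forall d, 0 < d < size x -> rot d x != x) -> cper x = size x.
Proof.
move=> Hx Hprim; rewrite /cper; set P := fun d => rot d.+1 x == x.
have Hhas : has P (iota 0 (size x)).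
  by apply/hasP; exists (size x).-1; rewrite ?mem_iota /P ?prednK ?rot_size //=; lia.
have := nth_find 0 Hhas; move: Hhas; rewrite has_find size_iota.
set j := find P _ => Hj; rewrite nth_iota // add0n => HP.
case: (ltnP j.+1 (size x)) => Hlt; last by lia.
by move: (Hprim j.+1); rewrite Hlt (eqP HP) eqxx => /(_ isT).
Qed.

Lemma occ_cyc_extension (x s t : seq T) :
  cper x = size x -> occ_fin s t = 1 ->
  (forall i, i < cper x -> match_at s x i ->
     exists p j, match_at t x p /\ occurs_fin_at s t j /\ p + j = i %[mod cper x]) ->
  occ_cyc t x = occ_cyc s x.
Proof.
move=> Hc /count_iota_eq1 [j0 Hj0 Huniq] Hext; rewrite /occ_cyc Hc.
have Hx : 0 < size x by rewrite -Hc.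
have x0 : T by case: x Hx {Hc Hext} => // x0.
have {}Huniq j : occurs_fin_at s t j -> j = j0.
  by move=> Hj; apply: Huniq => //; case/andP: Hj; lia.
case/(occurs_fin_atP x0): (Hj0) => Hj0s Hst.
apply: (count_iota_bij (f := fun p => (p + j0) %% size x)).
- move=> p1 p2; rewrite !inE => /andP [Hp1 _] /andP [Hp2 _] /eqP.
  by rewrite eqn_modDr !modn_small // => /eqP.
- move=> p Hp Htp; split; first by rewrite ltn_pmod.
  rewrite match_at_mod //; apply/(match_atP x0 _ _ Hx) => k Hk.
  by rewrite -Hst // (match_atP x0 _ _ Hx Htp) ?addnA //; lia.
move=> i Hi Hsi; have Hi' : i < cper x by rewrite Hc.
case: (Hext i Hi' Hsi) => p [j [Htp [/Huniq -> Hpj]]].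
exists (p %% size x); first by rewrite ltn_pmod // match_at_mod.
by rewrite modnDml; move: Hpj; rewrite Hc => ->; rewrite modn_small.
Qed.

End Occurrences.

Section Walks.
Variables (T V E : finType) (src tgt : E -> V) (lv : V -> seq T) (le : E -> seq T).

Local Notation wl := (wlabel src lv le).
Local Notation is_walk := (is_walk src tgt).
Local Notation wend := (wend tgt).

Definition increment (xs : seq E) : seq T :=
  flatten [seq drop (size (lv (src e))) (le e) | e <- xs].

Lemma wlabelE u xs : wl u xs = lv u ++ increment xs.
Proof. by []. Qed.

Lemma wlabel_nil u : wl u [::] = lv u.
Proof. exact: cats0. Qed.

Lemma increment_cat xs ys : increment (xs ++ ys) = increment xs ++ increment ys.
Proof. by rewrite /increment map_cat flatten_cat. Qed.

Lemma is_walk_cat u xs ys :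
  is_walk u (xs ++ ys) = is_walk u xs && is_walk (wend u xs) ys.
Proof. by elim: xs u => [|e xs IH] u //=; rewrite IH andbA. Qed.

Lemma wend_cat u xs ys : wend u (xs ++ ys) = wend (wend u xs) ys.
Proof. by rewrite /wend map_cat last_cat. Qed.

Lemma wend_cons u e xs : wend u (e :: xs) = wend (tgt e) xs.
Proof. by []. Qed.

Hypothesis AG : abstract_assembly_graph src tgt lv le.

Lemma wlabel_cons e :
  exists2 z, le e = z ++ lv (tgt e) &
             forall xs, wl (src e) (e :: xs) = z ++ wl (tgt e) xs.
Proof.
case: (AG e) => /prefixP [z1 Hz1] /suffixP [z Hz]; exists z => // xs.
by rewrite !wlabelE /increment /= catA {1}Hz1 drop_size_cat // -Hz1 Hz catA.
Qed.

Lemma wlabel_split u xs : is_walk u xs ->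
  exists y, forall ys, wl u (xs ++ ys) = y ++ wl (wend u xs) ys.
Proof.
elim: xs u => [|e xs IH] u /=; first by exists [::].
case/andP=> /eqP <- /IH [y Hy]; have [z _ Hz] := wlabel_cons e.
by exists (z ++ y) => ys; rewrite Hz Hy catA.
Qed.

Lemma size_lv_wend u xs : is_walk u xs -> size (lv (wend u xs)) <= size (wl u xs).
Proof.
case/wlabel_split=> y /(_ [::]); rewrite cats0 wlabel_nil => ->.
by rewrite size_cat leq_addl.
Qed.

Hypothesis NB : forall e, ~~ (prefix_edge tgt lv le e && suffix_edge src lv le e).

Lemma prefix_edge_lt e :
  prefix_edge tgt lv le e -> size (lv (src e)) < size (lv (tgt e)).
Proof.
move=> Hpre; case: (AG e) => /prefixP [z Hz] _.
have : z != [::].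
  by apply/eqP => z0; move: (NB e); rewrite Hpre /suffix_edge Hz z0 cats0 eqxx.
by move/eqP: Hpre => <-; rewrite Hz size_cat; case: z {Hz} => //= *; lia.
Qed.

Lemma suffix_edge_lt e :
  suffix_edge src lv le e -> size (lv (tgt e)) < size (lv (src e)).
Proof.
move=> Hsuf; case: (AG e) => _ /suffixP [z Hz].
have : z != [::].
  by apply/eqP => z0; move: (NB e); rewrite Hsuf /prefix_edge Hz z0 eqxx.
by move/eqP: Hsuf => <-; rewrite Hz size_cat; case: z {Hz} => //= *; lia.
Qed.
Lemma prefix_walk_lv_lt u xs : is_walk u xs -> xs != [::] ->
  size (wl u xs) = size (lv (wend u xs)) -> size (lv u) < size (lv (wend u xs)).
Proof.
elim: xs u => [//|e xs IH] u /= /andP [/eqP <- Hw] _.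
have [z Hz Hcons] := wlabel_cons e; rewrite Hcons size_cat wend_cons => Hsz.
have Hle := size_lv_wend Hw.
have Hz0 : z = [::] by apply: size0nil; lia.
have /prefix_edge_lt : prefix_edge tgt lv le e by rewrite /prefix_edge Hz Hz0.
rewrite Hz0 /= in Hsz; case: xs IH Hw Hsz {Hcons Hle} => [//|e' xs] IH Hw Hsz Hlt.
exact: ltn_trans Hlt (IH _ Hw isT Hsz).
Qed.

Lemma suffix_walk_lv_lt u xs : is_walk u xs -> xs != [::] ->
  increment xs = [::] -> size (lv (wend u xs)) < size (lv u).
Proof.
elim: xs u => [//|e xs IH] u /= /andP [/eqP <- Hw] _ Hinc.
have [He Hxs] : drop (size (lv (src e))) (le e) = [::] /\ increment xs = [::].
  by move: Hinc; rewrite /increment /=; case: (drop _ _).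
have /suffix_edge_lt : suffix_edge src lv le e.
  case: (AG e) => /prefixP [z Hz] _; move: He.
  by rewrite /suffix_edge Hz drop_size_cat // => ->; rewrite cats0.
rewrite wend_cons; case: xs IH Hw Hxs {Hinc} => [//|e' xs] IH Hw Hxs Hlt.
exact: ltn_trans (IH _ Hw isT Hxs) Hlt.
Qed.

Section Positions.
Variables (v0 : V) (F : seq E).
Hypothesis HF : is_walk v0 F.

Definition vtx k := wend v0 (take k F).
Definition wlen k := size (wl v0 (take k F)).
Definition vpos k := wlen k - size (lv (vtx k)).
Definition subwalk i j := drop i (take j F).

Lemma is_walk_take k : is_walk v0 (take k F).
Proof. by move: HF; rewrite -{1}(cat_take_drop k F) is_walk_cat => /andP []. Qed.

Lemma wlen_vpos k : wlen k = vpos k + size (lv (vtx k)).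
Proof. by rewrite /vpos subnK // size_lv_wend // is_walk_take. Qed.

Lemma vtx0 : vtx 0 = v0.
Proof. by rewrite /vtx take0. Qed.

Lemma vpos0 : vpos 0 = 0.
Proof. by rewrite /vpos /wlen /vtx take0 wlabel_nil subnn. Qed.

Lemma wlen_size : wlen (size F) = size (wl v0 F).
Proof. by rewrite /wlen take_size. Qed.

Lemma take_subwalk i j : i <= j -> take j F = take i F ++ subwalk i j.
Proof. by move=> Hij; rewrite /subwalk -{1}(cat_take_drop i (take j F)) take_takel. Qed.

Lemma is_walk_subwalk i j : i <= j -> is_walk (vtx i) (subwalk i j).
Proof.
move=> Hij; move: (is_walk_take j).
by rewrite (take_subwalk Hij) is_walk_cat => /andP [].
Qed.

Lemma vtx_subwalk i j : i <= j -> vtx j = wend (vtx i) (subwalk i j).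
Proof. by move=> Hij; rewrite /vtx (take_subwalk Hij) wend_cat. Qed.

Lemma wlabel_take_subwalk i j : i <= j ->
  exists2 y, size y = vpos i & wl v0 (take j F) = y ++ wl (vtx i) (subwalk i j).
Proof.
move=> Hij; have [y Hy] := wlabel_split (is_walk_take i); exists y.
  move: (Hy [::]); rewrite cats0 wlabel_nil /vpos /wlen => ->.
  by rewrite size_cat addnK.
by rewrite (take_subwalk Hij) Hy.
Qed.

Lemma wlen_subwalk i j : i <= j -> wlen j = vpos i + size (wl (vtx i) (subwalk i j)).
Proof. by case/wlabel_take_subwalk=> y Hy Hj; rewrite /wlen Hj size_cat Hy. Qed.

Lemma occurs_subwalk i j : i <= j ->
  occurs_fin_at (wl (vtx i) (subwalk i j)) (wl v0 F) (vpos i).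
Proof.
case/wlabel_take_subwalk=> y <- Hj.
have -> : wl v0 F = wl v0 (take j F) ++ increment (drop j F).
  by rewrite !wlabelE -catA -increment_cat cat_take_drop.
by rewrite Hj -catA occurs_fin_at_catl.
Qed.

Lemma occurs_vtx k : occurs_fin_at (lv (vtx k)) (wl v0 F) (vpos k).
Proof.
have := occurs_subwalk (leqnn k).
by rewrite /subwalk drop_oversize ?wlabel_nil // size_take_min geq_minl.
Qed.

Lemma vpos_mono i j : i <= j -> vpos i <= vpos j.
Proof.
move=> Hij; have := wlen_subwalk Hij; rewrite wlen_vpos (vtx_subwalk Hij).
by have := size_lv_wend (is_walk_subwalk Hij); lia.
Qed.

Lemma wlen_mono i j : i <= j -> wlen i <= wlen j.
Proof. by move=> Hij; rewrite (wlen_subwalk Hij) wlen_vpos wlabelE size_cat; lia. Qed.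

Lemma size_subwalk i j : j <= size F -> size (subwalk i j) = j - i.
Proof. by move=> Hj; rewrite /subwalk size_drop size_takel. Qed.

Lemma vocc_vtx v : vocc tgt v F = count (fun i => vtx i.+1 == v) (iota 0 (size F)).
Proof.
case HF0 : F => [//|e0 F']; rewrite -HF0.
rewrite /vocc -{1}(mkseq_nth e0 F) /mkseq count_map; apply: eq_in_count => i.
by rewrite mem_iota /= => Hi; rewrite /vtx (take_nth e0) // /wend map_rcons last_rcons.
Qed.

Lemma vpos_lt i j : i < j -> j <= size F -> vtx i = vtx j -> vpos i < vpos j.
Proof.
move=> Hij Hj Hvtx; have Hij' := ltnW Hij.
rewrite ltn_neqAle vpos_mono // andbT; apply/eqP => Hpos.
have Hne : subwalk i j != [::] by rewrite -size_eq0 size_subwalk //; lia.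
have Hsz : size (wl (vtx i) (subwalk i j)) = size (lv (wend (vtx i) (subwalk i j))).
  by rewrite -vtx_subwalk //; have := wlen_subwalk Hij'; rewrite wlen_vpos -Hpos; lia.
move: (prefix_walk_lv_lt (is_walk_subwalk Hij') Hne Hsz).
by rewrite -vtx_subwalk // Hvtx ltnn.
Qed.

Lemma take_cat_subwalk i j l r : i <= j -> j <= size F -> subwalk i j = l ++ r ->
  take (i + size l) F = take i F ++ l.
Proof.
move=> Hij Hj Hsub.
have Htj : take j F = take i F ++ l ++ r by rewrite (take_subwalk Hij) Hsub.
have Hl : i + size l <= j by move: (size_subwalk i Hj); rewrite Hsub size_cat; lia.
by rewrite -(take_takel _ Hl) Htj catA take_size_cat // size_cat size_takel //; lia.
Qed.

Hypothesis NR : non_redundant src tgt lv le.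

Lemma nonredundant_subwalk p0 ps q :
  is_walk p0 ps -> occurs_fin_at (wl p0 ps) (wl v0 F) q ->
  0 < q -> q + size (wl p0 ps) < size (wl v0 F) ->
  exists2 k, k + size ps <= size F &
    [/\ vtx k = p0, subwalk k (k + size ps) = ps & vpos k = q].
Proof.
move=> Hps Hocc Hq0 Hq; set w := wl p0 ps in Hocc Hq *.
(* [a]: the last vertex whose label starts before the occurrence;
   [b]: the first prefix of [F] whose label extends past it *)
have exA : exists k, (k <= size F) && (vpos k < q) by exists 0; rewrite vpos0 Hq0.
have ubA k : (k <= size F) && (vpos k < q) -> k <= size F by case/andP.
case: (ex_maxnP exA ubA) => a /andP [Ha Hpa] a_max.
have exB : exists k, (k <= size F) && (q + size w < wlen k).
  by exists (size F); rewrite leqnn wlen_size.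
case: (ex_minnP exB) => b /andP [Hb Hwb] b_min.
set c := maxn a b; have Hac : a <= c := leq_maxl a b; have Hbc : b <= c := leq_maxr a b.
have Hc : c <= size F by rewrite geq_max Ha Hb.
have Hinfix : proper_infix w (wl (vtx a) (subwalk a c)).
  apply: (occurs_fin_at_proper_infix Hocc (occurs_subwalk Hac) Hpa).
  by have := wlen_subwalk Hac; have := wlen_mono Hbc; lia.
case: (NR Hps (is_walk_subwalk Hac) Hinfix) => l [r [Hl [Hr [Hsub Hend]]]].
have Hsz := size_subwalk a Hc; rewrite Hsub !size_cat in Hsz.
have [Hl0 Hr0] : 0 < size l /\ 0 < size r by case: (l) (r) Hl Hr => [|? ?] [|? ?].
have Hcb : c = b by apply/maxn_idPr; move: Hsz; rewrite /c; case: leqP => //; lia.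
have Htk := take_cat_subwalk Hac Hc Hsub.
have Htk2 : take (a + size (l ++ ps)) F = take a F ++ l ++ ps.
  by apply: (take_cat_subwalk Hac Hc); rewrite Hsub catA.
have Hsubk : subwalk (a + size l) (a + size l + size ps) = ps.
  rewrite /subwalk -addnA -size_cat Htk2 catA drop_size_cat //.
  by rewrite size_cat size_takel //; lia.
have Hvtxk : vtx (a + size l) = p0 by rewrite /vtx Htk wend_cat.
exists (a + size l); first by lia.
have Hwk : wlen (a + size l + size ps) = vpos (a + size l) + size w.
  by rewrite (wlen_subwalk (leq_addr _ _)) Hsubk Hvtxk.
split=> //; apply/eqP; rewrite eqn_leq; apply/andP; split.
  case: leqP => // Hlt.
  have : b <= a + size l + size ps by apply: b_min; apply/andP; split; lia.
  by lia.
case: leqP => // Hlt.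
have : a + size l <= a by apply: a_max; apply/andP; split; lia.
by lia.
Qed.

End Positions.

End Walks.

Section Circuit.
Variables (T V E : finType) (src tgt : E -> V) (lv : V -> seq T) (le : E -> seq T).
Hypothesis AG : abstract_assembly_graph src tgt lv le.
Hypothesis NB : forall e, ~~ (prefix_edge tgt lv le e && suffix_edge src lv le e).
Hypothesis NR : non_redundant src tgt lv le.
Variables (v0 : V) (es : seq E).
Hypotheses (Hw : is_walk src tgt v0 es) (Hc : wend tgt v0 es = v0) (Hne : es != [::]).

Local Notation wl := (wlabel src lv le).
Local Notation L := (clabel src lv le v0 es).
Local Notation m := (size L).
Local Notation n := (size es).
Local Notation l0 := (size (lv v0)).
Local Notation loop r := (flatten (nseq r es)).
Local Notation vtxC := (vtx tgt v0 es).
Local Notation vposC := (vpos src tgt lv le v0 es).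

Lemma clabelE : L = increment src lv le es.
Proof. by rewrite /clabel wlabelE drop_size_cat. Qed.

Lemma size_clabel_gt0 : 0 < m.
Proof.
rewrite lt0n size_eq0 clabelE; apply/eqP => Hinc.
by have := suffix_walk_lv_lt AG NB Hw Hne Hinc; rewrite Hc ltnn.
Qed.

Lemma is_walk_loop r : is_walk src tgt v0 (loop r).
Proof. by elim: r => //= r IH; rewrite is_walk_cat Hw Hc. Qed.

Lemma wend_loop r : wend tgt v0 (loop r) = v0.
Proof. by elim: r => //= r IH; rewrite wend_cat Hc. Qed.

Lemma increment_loop r : increment src lv le (loop r) = flatten (nseq r L).
Proof. by elim: r => //= r IH; rewrite increment_cat IH clabelE. Qed.

Lemma wlabel_loop r : wl v0 (loop r) = lv v0 ++ flatten (nseq r L).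
Proof. by rewrite wlabelE increment_loop. Qed.

Lemma size_wlabel_loop r : size (wl v0 (loop r)) = l0 + r * m.
Proof. by rewrite wlabel_loop size_cat size_flatten_nseq. Qed.

Lemma take_loop r j i : j < r -> i <= n ->
  take (j * n + i) (loop r) = loop j ++ take i es.
Proof.
move=> Hj Hi; have -> : r = j + (r - j).-1.+1 by lia.
rewrite nseqD flatten_cat take_cat size_flatten_nseq ltnNge leq_addr /= addKn.
congr (_ ++ _); rewrite take_cat; case: ltnP => Hi' //.
have -> : i = n by lia.
by rewrite subnn take0 cats0 take_size.
Qed.

Lemma vtx_loop r j i : j < r -> i <= n -> vtx tgt v0 (loop r) (j * n + i) = vtxC i.
Proof. by move=> Hj Hi; rewrite /vtx take_loop // wend_cat wend_loop. Qed.

Lemma vpos_loop r j i : j < r -> i <= n ->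
  vpos src tgt lv le v0 (loop r) (j * n + i) = j * m + vposC i.
Proof.
move=> Hj Hi; have := wlen_vpos AG Hw i; rewrite /wlen wlabelE size_cat => Hi_pos.
rewrite {1}/vpos vtx_loop // /wlen take_loop // wlabelE increment_cat increment_loop.
by rewrite !size_cat size_flatten_nseq; lia.
Qed.
Lemma subwalk_loop r k : k + n <= r * n -> subwalk (loop r) k (k + n) = rot (k %% n) es.
Proof. by apply: drop_take_flatten_nseq; rewrite lt0n size_eq0. Qed.

Lemma occurs_wlabel_loop r t q : l0 <= q -> q + size t <= l0 + r * m ->
  occurs_fin_at t (wl v0 (loop r)) q = match_at t L (q - l0).
Proof.
move=> Hq Hqt; have Hm := size_clabel_gt0.
have x0 : T by case: (clabel _ _ _ _ _) Hm => // x0.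
have Hsz := size_wlabel_loop r.
have Hnth k : q + k < l0 + r * m ->
    nth x0 (wl v0 (loop r)) (q + k) = nth x0 L ((q - l0 + k) %% m).
  move=> Hk; rewrite wlabel_loop nth_cat ltnNge (leq_trans Hq (leq_addr _ _)) /=.
  by rewrite nth_flatten_nseq; [congr (nth _ _ (_ %% _)) |]; lia.
apply/(occurs_fin_atP x0)/(match_atP x0 _ _ Hm) => [[_ H] k Hk | H].
  by rewrite -H // Hnth //; lia.
by split=> [|k Hk]; [rewrite Hsz | rewrite Hnth ?H //]; lia.
Qed.

Hypothesis Hprim : primitive_edges es.

Lemma rot_clabel_neq d : 0 < d < m -> rot d L != L.
Proof.
case/andP=> Hd0 Hdm; apply/eqP => Hrot.
have Hm := size_clabel_gt0; have Hn : 0 < n by rewrite lt0n size_eq0.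
set R := l0.+1; set r := R.+2; have HF := is_walk_loop r.
have HRm : R <= R * m by rewrite leq_pmulr.
have Hwl : size (wl v0 es) = l0 + m by rewrite wlabelE -clabelE size_cat.
have Hturn : occurs_fin_at (wl v0 es) (wl v0 (loop r)) (R * m).
  have Hrn : R * n + n <= r * n by rewrite -mulSnr leq_pmul2r.
  have := occurs_subwalk AG HF (leq_addr n (R * n)).
  rewrite subwalk_loop // modnMl rot0.
  by rewrite -[R * n]addn0 vtx_loop ?vpos_loop // vtx0 vpos0 addn0.
have Hrm : r * m = R * m + m + m by rewrite /r !mulSn; lia.
have Hshift : occurs_fin_at (wl v0 es) (wl v0 (loop r)) (R * m + d).
  rewrite occurs_wlabel_loop ?Hwl; try lia.
  have -> : R * m + d - l0 = R * m - l0 + d by lia.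
  by apply: match_at_rot; rewrite // -(occurs_wlabel_loop (r := r)) ?Hwl; try lia.
have [||k Hk [_ Hsub Hpos]] := nonredundant_subwalk AG HF NR Hw Hshift;
  rewrite ?Hwl ?size_wlabel_loop; try lia.
rewrite size_flatten_nseq in Hk; rewrite subwalk_loop // in Hsub.
have Hkn : k %% n = 0 by apply: rot_primitive Hsub; rewrite ?ltn_pmod.
have Hj : k %/ n < r by rewrite ltn_divLR //; lia.
move: Hpos; rewrite (divn_eq k n) Hkn vpos_loop // vpos0 addn0 => /(congr1 (modn^~ m)).
by rewrite modnMl modnMDl modn_small //; lia.
Qed.

Lemma cper_clabel : cper L = m.
Proof. exact: cper_size size_clabel_gt0 rot_clabel_neq. Qed.

(* The offset [l0.+1 * m] keeps the removal of the prefix [lv v0] from truncating. *)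
Definition visit_pos i := (l0.+1 * m + vposC i.+1 - l0) %% m.

Lemma match_at_visit_pos i : i < n -> match_at (lv (vtxC i.+1)) L (visit_pos i).
Proof.
move=> Hi; have Hm := size_clabel_gt0; set R := l0.+1.
have HRm : R <= R * m by rewrite leq_pmulr.
have := occurs_vtx AG (is_walk_loop R.+1) (R * n + i.+1).
rewrite vtx_loop ?vpos_loop // => Hocc.
have /andP [Hsz _] := Hocc; rewrite size_wlabel_loop in Hsz.
by move: Hocc; rewrite occurs_wlabel_loop ?match_at_mod; try lia.
Qed.

Lemma visit_pos_inj i1 i2 : i1 < n -> i2 < n -> vtxC i1.+1 = vtxC i2.+1 ->
  visit_pos i1 = visit_pos i2 -> i1 = i2.
Proof.
wlog Hle : i1 i2 / i1 <= i2.
  move=> H Hi1 Hi2 Hv Hp; case: (leqP i1 i2) => [|/ltnW] Hle; first exact: H.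
  exact: esym (H i2 i1 Hle Hi2 Hi1 (esym Hv) (esym Hp)).
move=> Hi1 Hi2 Hv Hp; move: Hle; rewrite leq_eqVlt => /orP [/eqP // | Hlt]; exfalso.
have Hn : 0 < n by rewrite lt0n size_eq0.
set R := l0.+1; set r := R.+2; have HF := is_walk_loop r.
have HRm : R <= R * m by rewrite leq_pmulr ?size_clabel_gt0.
have Hsz : size (loop r) = r * n by rewrite size_flatten_nseq.
have Hrn : R.+1 * n + n <= r * n by rewrite -mulSnr leq_pmul2r.
have H12 : R * m + vposC i1.+1 < R * m + vposC i2.+1.
  have := vpos_lt AG NB HF (i := R * n + i1.+1) (j := R * n + i2.+1).
  by rewrite !vtx_loop ?vpos_loop // Hsz; apply; [lia | lia |].
have H23 : R * m + vposC i2.+1 < R.+1 * m + vposC i1.+1.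
  have := vpos_lt AG NB HF (i := R * n + i2.+1) (j := R.+1 * n + i1.+1).
  by rewrite !vtx_loop ?vpos_loop // Hsz; apply; [rewrite mulSnr; lia | lia |].
have := eq_modn_window (a := R * m + vposC i1.+1 - l0)
                       (b := R * m + vposC i2.+1 - l0) _ Hp.
by rewrite mulSnr in H23; lia.
Qed.

Lemma visit_pos_onto v p : p < m -> match_at (lv v) L p ->
  exists2 i, i < n /\ vtxC i.+1 = v & visit_pos i = p.
Proof.
move=> Hp Hvp; have Hm := size_clabel_gt0; have Hn : 0 < n by rewrite lt0n size_eq0.
set R := l0.+1; set r := R + size (lv v) + 2; have HF := is_walk_loop r.
have HRm : R <= R * m by rewrite leq_pmulr.
have Hvm : size (lv v) <= size (lv v) * m by rewrite leq_pmulr.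
have Hrm : r * m = R * m + size (lv v) * m + m + m by rewrite /r !mulnDl; lia.
have Hocc : occurs_fin_at (wl v [::]) (wl v0 (loop r)) (l0 + R * m + p).
  rewrite wlabel_nil occurs_wlabel_loop; try lia.
  by rewrite -match_at_mod // (_ : _ - l0 = R * m + p) ?modnMDl ?match_at_mod //; lia.
have Hv : is_walk src tgt v [::] by [].
have [||k Hk [Hvtx _ Hpos]] := nonredundant_subwalk AG HF NR Hv Hocc;
  rewrite ?wlabel_nil ?size_wlabel_loop; try lia.
rewrite addn0 size_flatten_nseq in Hk.
have Hk0 : 0 < k by case: k Hpos {Hk Hvtx} => [|//]; rewrite vpos0; lia.
have Hkd : k = k.-1 %/ n * n + (k.-1 %% n).+1 by rewrite addnS -divn_eq prednK.
have Hj : k.-1 %/ n < r by rewrite ltn_divLR //; lia.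
rewrite Hkd vtx_loop ?ltn_pmod // in Hvtx; rewrite Hkd vpos_loop ?ltn_pmod // in Hpos.
set i := k.-1 %% n in Hvtx Hpos; set j := k.-1 %/ n in Hpos.
exists i; first by rewrite ltn_pmod.
rewrite /visit_pos -/R -(modnMDl j) (_ : j * m + _ = (R + R) * m + p).
  by rewrite modnMDl modn_small.
by rewrite mulnDl; lia.
Qed.

Lemma vocc_count_clabel v : vocc tgt v es = count (match_at (lv v) L) (iota 0 m).
Proof.
rewrite (vocc_vtx tgt v0); apply: (count_iota_bij (f := visit_pos)).
- move=> i1 i2; rewrite !inE => /andP [Hi1 /eqP Hv1] /andP [Hi2 /eqP Hv2].
  by apply: visit_pos_inj; rewrite // Hv1 Hv2.
- by move=> i Hi /eqP <-; rewrite ltn_pmod ?size_clabel_gt0 ?match_at_visit_pos.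
move=> p Hp /(visit_pos_onto Hp) [i [Hi Hv] Hpi].
by exists i; rewrite // Hv eqxx.
Qed.

Lemma vocc_occ_cyc v : vocc tgt v es = occ_cyc (lv v) L.
Proof. by rewrite vocc_count_clabel /occ_cyc cper_clabel. Qed.

End Circuit.

Theorem theorem14 (T : finType) (V E : finType) (src tgt : E -> V)
    (lv : V -> seq T) (le : E -> seq T) (v : V) (s : seq T) :
  assembly_graph src tgt lv le ->
  non_redundant src tgt lv le ->
  is_MES_of (CPC src tgt lv le) s (lv v) ->
  forall (v0 : V) (es : seq E), circuit src tgt v0 es ->
    vocc tgt v es = occ_cyc s (clabel src lv le v0 es).
Proof.
move=> [AG [_ [_ NB]]] NR [_ [_ [Hs1 Hext]]] v0 es Hcirc.
have [/and3P [Hne Hw /eqP Hc] Hprim] := Hcirc.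
rewrite (vocc_occ_cyc AG NB NR Hw Hc Hne Hprim).
apply: occ_cyc_extension => //; first exact: (cper_clabel AG NB NR Hw Hc Hne Hprim).
by apply: Hext; exists v0, es.
Qed.
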